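(* Let ${\bf i}=(i_1,\dots,i_N)$ be a reduced word for $w_0$ and identify $\mathbb Z^N$ with the cellular crystal $B_{\bf i}=B_{i_1}\otimes\cdots\otimes B_{i_N}$ via $(x_1,\dots,x_N)\leftrightarrow(x_1)_{i_1}\otimes\cdots\otimes(x_N)_{i_N}$. Then for every $i\in I$, $x\in\mathbb Z^N$ and $H\in{\mathcal H}_{\bf i}$, $\tilde e_i(x+H)=\tilde e_i(x)+H$ and $\tilde f_i(x+H)=\tilde f_i(x)+H$.
   Context: $\mathfrak g$ simple with index set $I$, simple roots $\alpha_i$, coroots $h_i$, Cartan matrix $a_{ij}=\alpha_j(h_i)$, $w_0$ longest Weyl element of length $N$. Crystal $B_i=\{(x)_i\mid x\in\mathbb Z\}$: ${\rm wt}((x)_i)=x\alpha_i$, $\varepsilon_i((x)_i)=-x$, $\varphi_i((x)_i)=x$, $\tilde e_i(x)_i=(x+1)_i$, $\tilde f_i(x)_i=(x-1)_i$, and for $j\neq i$: $\varepsilon_j=\varphi_j=-\infty$, $\tilde e_j=\tilde f_j=0$. Tensor product of crystals: ${\rm wt}(b_1\otimes b_2)={\rm wt}(b_1)+{\rm wt}(b_2)$, $\varepsilon_i(b_1\otimes b_2)=\max(\varepsilon_i(b_1),\varepsilon_i(b_2)-\langle h_i,{\rm wt}(b_1)\rangle)$, $\varphi_i(b_1\otimes b_2)=\max(\varphi_i(b_2),\varphi_i(b_1)+\langle h_i,{\rm wt}(b_2)\rangle)$, $\tilde e_i(b_1\otimes b_2)=\tilde e_ib_1\otimes b_2$ if $\varphi_i(b_1)\ge\varepsilon_i(b_2)$,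 else $b_1\otimes\tilde e_ib_2$; $\tilde f_i(b_1\otimes b_2)=\tilde f_ib_1\otimes b_2$ if $\varphi_i(b_1)>\varepsilon_i(b_2)$, else $b_1\otimes\tilde f_ib_2$ (multiple tensor products are associative). For $k\in[1,N]$, $k^{(+)}:=\min\{l>k\mid i_l=i_k\}$ when it exists; $\beta_k(x)=x_k+\sum_{k<j<k^{(+)}}a_{i_k,i_j}x_j+x_{k^{(+)}}$; ${\mathcal H}_{\bf i}:=\{x\in\mathbb Z^N\mid\beta_k(x)=0$ for all $k$ with $k^{(+)}\le N\}$. *)

From HB Require Import structures.
From mathcomp Require Import all_boot all_order all_algebra.
Set Implicit Arguments. Unset Strict Implicit. Unset Printing Implicit Defensive.
Import Order.TTheory GRing.Theory Num.Theory.
Local Open Scope ring_scope.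

(* Index set I = 'I_n.+1 (a simple Lie algebra has rank >= 1).
   Cartan matrix A i j = a_{ij} = alpha_j(h_i). *)
Section Cartan.
Variable n : nat.
Notation I := 'I_n.+1.
Variable A : I -> I -> int.

Definition simple_cartan : Prop :=
  [/\ (forall i, A i i = 2),
      (forall i j, i != j -> A i j <= 0),
      (forall i j, (A i j == 0) = (A j i == 0)),
      (exists d : I -> int,
          (forall i, 0 < d i) /\
          (forall i j, d i * A i j = d j * A j i) /\
          (forall v : I -> int, (exists i, v i != 0) ->
             0 < \sum_(i : I) \sum_(j : I) v i * d i * A i j * v j))
    & (forall S : {set I}, S != set0 -> S != setT ->
          exists i j, [/\ i \in S, j \notin S & A i j != 0])].

(* Weyl group acting on the root lattice (coefficient vectors w.r.t. the
   simple roots): s_i(v) = v - <h_i, v> alpha_i. *)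
Definition sref (i : I) (c : I -> int) : I -> int :=
  fun j => if j == i then c i - \sum_(k : I) A i k * c k else c j.

Definition wact (w : seq I) (c : I -> int) : I -> int := foldr sref c w.

Definition sroot (j : I) : I -> int := fun k => (k == j)%:R.

Definition weq (w w' : seq I) : Prop :=
  forall j k, wact w (sroot j) k = wact w' (sroot j) k.

(* w is a reduced word of the longest element w_0: it is reduced (no shorter
   word gives the same element) and every Weyl group element has length at
   most size w. *)
Definition reduced_w0 (w : seq I) : Prop :=
  (forall w', (size w' < size w)%N -> ~ weq w w') /\
  (forall u, exists u', weq u u' /\ (size u' <= size w)%N).

(* k^{(+)} (0-based positions) *)
Definition kplus (w : seq I) (k : nat) : option nat :=
  let s := drop k.+1 w in
  let j := find (pred1 (nth ord0 w k)) s in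
  if (j < size s)%N then Some (k.+1 + j)%N else None.

Definition inH (w : seq I) (H : seq int) : Prop :=
  size H = size w /\
  forall k kp, (k < size w)%N -> kplus w k = Some kp ->
    nth 0 H k + \sum_(k.+1 <= j < kp) A (nth ord0 w k) (nth ord0 w j) * nth 0 H j
      + nth 0 H kp = 0.

(* Z cup {-oo}: None = -oo *)
Definition ext := option int.
Definition emax (a b : ext) : ext :=
  match a, b with
  | None, _ => b | _, None => a
  | Some x, Some y => Some (if x <= y then y else x) end.
Definition eaddz (a : ext) (z : int) : ext := omap (fun x => x + z) a.
Definition ege (a b : ext) : bool :=
  match a, b with
  | _, None => true | None, Some _ => false | Some x, Some y => y <= x end.
Definition egt (a b : ext) : bool :=
  match a, b with
  | None, _ => false | Some _, None => true | Some x, Some y => y < x end.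

(* an element (v)_j of B_j *)
Definition cell := (I * int)%type.
(* <h_i, wt((v)_j)> = v a_{ij} *)
Definition hw (i : I) (b : cell) : int := b.2 * A i b.1.
Definition eps1 (i : I) (b : cell) : ext := if b.1 == i then Some (- b.2) else None.
Definition phi1 (i : I) (b : cell) : ext := if b.1 == i then Some b.2 else None.
Definition e1 (i : I) (b : cell) : option cell :=
  if b.1 == i then Some (b.1, b.2 + 1) else None.
Definition f1 (i : I) (b : cell) : option cell :=
  if b.1 == i then Some (b.1, b.2 - 1) else None.

(* tensor products b_1 (x) (b_2 (x) ( ... )) ; the empty list only serves as
   a base case (eps = phi = -oo, e = f = 0), which yields the correct values
   on one-factor lists. *)
Fixpoint hwt (i : I) (l : seq cell) : int :=
  if l is b :: l' then hw i b + hwt i l' else 0.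
Fixpoint eps (i : I) (l : seq cell) : ext :=
  if l is b :: l' then emax (eps1 i b) (eaddz (eps i l') (- hw i b)) else None.
Fixpoint phi (i : I) (l : seq cell) : ext :=
  if l is b :: l' then emax (phi i l') (eaddz (phi1 i b) (hwt i l')) else None.
Fixpoint etil (i : I) (l : seq cell) : option (seq cell) :=
  if l is b :: l' then
    if ege (phi1 i b) (eps i l') then omap (fun b' => b' :: l') (e1 i b)
    else omap (fun l'' => b :: l'') (etil i l')
  else None.
Fixpoint ftil (i : I) (l : seq cell) : option (seq cell) :=
  if l is b :: l' then
    if egt (phi1 i b) (eps i l') then omap (fun b' => b' :: l') (f1 i b)
    else omap (fun l'' => b :: l'') (ftil i l')
  else None.

(* Z^N identified with B_i: x <-> (x_1)_{i_1} (x) ... (x) (x_N)_{i_N};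
   None stands for 0. *)
Definition ecell (w : seq I) (i : I) (x : seq int) : option (seq int) :=
  omap (map snd) (etil i (zip w x)).
Definition fcell (w : seq I) (i : I) (x : seq int) : option (seq int) :=
  omap (map snd) (ftil i (zip w x)).

End Cartan.

Definition cell_add (x y : seq int) : seq int := [seq (p.1 + p.2)%R | p <- zip x y].

From mathcomp Require Import all_boot all_order all_algebra.
From mathcomp Require Import ring.
Set Implicit Arguments. Unset Strict Implicit. Unset Printing Implicit Defensive.
Import Order.TTheory GRing.Theory Num.Theory.
Local Open Scope ring_scope.

(* Translating the cells of a tensor word by h shifts ε_i of the word by an
   amount [eps_shift] that depends only on the letters and on h, while φ_i of
   a single cell (x)_i moves by its own translation h_k.  The tensor rule only
   compares φ_i(b_k) with ε_i of the suffix after k when i_k = i, and for such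
   k the β-relation between k and its next i-position k^(+) says precisely
   that both sides move by h_k.  Hence every comparison, and with it the cell
   on which ẽ_i or f̃_i acts, is unchanged. *)

Lemma eaddzA (e : ext) p q : eaddz (eaddz e p) q = eaddz e (p + q).
Proof. by case: e => //= v; rewrite addrA. Qed.

Lemma eaddz_emax (a b : ext) z : eaddz (emax a b) z = emax (eaddz a z) (eaddz b z).
Proof. by case: a b => [a|] [b|] //=; rewrite lerD2r; case: ifP. Qed.

Lemma eq_eaddz (e : ext) p q : (e != None -> p = q) -> eaddz e p = eaddz e q.
Proof. by case: e => //= v ->. Qed.

Lemma ege_eaddz2 (x s : int) (e : ext) :
  ege (Some (x + s)) (eaddz e s) = ege (Some x) e.
Proof. by case: e => //= v; rewrite lerD2r. Qed.

Lemma egt_eaddz2 (x s : int) (e : ext) :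
  egt (Some (x + s)) (eaddz e s) = egt (Some x) e.
Proof. by case: e => //= v; rewrite ltrD2r. Qed.

Lemma ege_None_eaddz (e : ext) s : ege None (eaddz e s) = ege None e.
Proof. by case: e. Qed.

Section Translation.

Variables (n : nat) (A : 'I_n.+1 -> 'I_n.+1 -> int) (i : 'I_n.+1).

Definition translate (l : seq (cell n)) (h : seq int) : seq (cell n) :=
  [seq (p.1.1, p.1.2 + p.2) | p <- zip l h].

Fixpoint eps_shift (w : seq 'I_n.+1) (h : seq int) : int :=
  match w, h with
  | c :: w', h0 :: h' => if c == i then - h0 else eps_shift w' h' - h0 * A i c
  | _, _ => 0
  end.

Fixpoint shift_compatible (w : seq 'I_n.+1) (h : seq int) : Prop :=
  match w, h with
  | c :: w', h0 :: h' => shift_compatible w' h' /\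
      (c == i -> has (pred1 i) w' -> h0 = eps_shift w' h')
  | _, _ => True
  end.

Lemma has_eps (l : seq (cell n)) :
  eps A i l != None -> has (pred1 i) (map fst l).
Proof.
elim: l => [//|b l IH] /=; rewrite /eps1.
case: (b.1 =P i) => [_ _ //|_ /=].
by case: (eps A i l) IH => //= v ->.
Qed.

Lemma eps_shiftE (w : seq 'I_n.+1) h :
  size h = size w -> (find (pred1 i) w < size w)%N ->
  eps_shift w h = - nth 0 h (find (pred1 i) w)
    - \sum_(0 <= j < find (pred1 i) w) A i (nth ord0 w j) * nth 0 h j.
Proof.
elim: w h => [|c w IH] [|h0 h] //= [Hs].
case: (c =P i) => [_|_] /=; first by rewrite big_geq // subr0.
by rewrite ltnS => Hf; rewrite IH // big_nat_recl //=; ring.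
Qed.

Lemma inH_behead a (w : seq 'I_n.+1) h0 H :
  inH A (a :: w) (h0 :: H) -> inH A w H.
Proof.
case=> [[Hs] HB]; split => // k kp Hk Hkp.
have := HB k.+1 kp.+1 Hk; rewrite /kplus /= in Hkp *.
by move: Hkp; case: ifP => // _ [<-] /(_ erefl); rewrite big_add1.
Qed.

Lemma inH_shift_compatible (w : seq 'I_n.+1) H :
  inH A w H -> shift_compatible w H.
Proof.
elim: w H => [|a w IH] [|h0 H] //= HH.
split; first exact: IH (inH_behead HH).
move=> /eqP Ea has_i; case: HH => [[Hs] HB].
have Hf : (find (pred1 i) w < size w)%N by rewrite -has_find.
have := HB 0%N (find (pred1 i) w).+1 erefl.
rewrite /kplus /= drop0 Ea Hf add1n => /(_ erefl).
rewrite big_add1 /= (eps_shiftE Hs Hf).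
move: (\sum_(_ <= _ < _) _) (H`_ _) => s t beta0.
by apply/eqP; rewrite -subr_eq0 -beta0; apply/eqP; ring.
Qed.

Hypothesis Aii : A i i = 2.

Lemma eps_translate (l : seq (cell n)) h :
  size h = size l -> shift_compatible (map fst l) h ->
  eps A i (translate l h) = eaddz (eps A i l) (eps_shift (map fst l) h).
Proof.
elim: l h => [|b l IH] [|h0 h] //= [Hs] [Hc Hb].
rewrite IH // /eps1 /hw /=.
case: (b.1 =P i) => [Ebi|_]; last by rewrite !eaddzA; apply: eq_eaddz => _; ring.
rewrite eaddz_emax; congr (emax _ _); first by rewrite /= opprD.
rewrite !eaddzA; apply: eq_eaddz => Hn.
by rewrite -(Hb (introT eqP Ebi) (has_eps Hn)) Ebi Aii; ring.
Qed.

Lemma eps_translate_at_i (b : cell n) (l : seq (cell n)) h0 h :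
  b.1 = i -> size h = size l -> shift_compatible (map fst (b :: l)) (h0 :: h) ->
  eps A i (translate l h) = eaddz (eps A i l) h0.
Proof.
move=> Ebi Hs [Hc Hb]; rewrite eps_translate //; apply: eq_eaddz => Hn.
by rewrite (Hb (introT eqP Ebi) (has_eps Hn)).
Qed.

Lemma etil_translate (l : seq (cell n)) h :
  size h = size l -> shift_compatible (map fst l) h ->
  etil A i (translate l h) = omap (translate^~ h) (etil A i l).
Proof.
elim: l h => [|b l IH] [|h0 h] //= [Hs] Hc.
have IHl : etil A i (translate l h) = omap (translate^~ h) (etil A i l).
  by apply: IH => //; case: Hc.
rewrite /phi1 /e1 /=; case: (b.1 =P i) => [Ebi|_].
- rewrite (eps_translate_at_i Ebi Hs Hc) ege_eaddz2.
  by case: ifP => _ /=; [rewrite addrAC | rewrite IHl; case: (etil A i l)].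
- case: Hc => Hc _; rewrite eps_translate // ege_None_eaddz.
  by case: ifP => _ //=; rewrite IHl; case: (etil A i l).
Qed.

Lemma ftil_translate (l : seq (cell n)) h :
  size h = size l -> shift_compatible (map fst l) h ->
  ftil A i (translate l h) = omap (translate^~ h) (ftil A i l).
Proof.
elim: l h => [|b l IH] [|h0 h] //= [Hs] Hc.
have IHl : ftil A i (translate l h) = omap (translate^~ h) (ftil A i l).
  by apply: IH => //; case: Hc.
rewrite /phi1 /f1 /=; case: (b.1 =P i) => [Ebi|_].
- rewrite (eps_translate_at_i Ebi Hs Hc) egt_eaddz2.
  by case: ifP => _ /=; [rewrite addrAC | rewrite IHl; case: (ftil A i l)].
- by rewrite IHl; case: (ftil A i l).
Qed.

End Translation.

Lemma zip_cell_add n (w : seq 'I_n.+1) x H :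
  zip w (cell_add x H) = translate (zip w x) H.
Proof. by elim: w x H => [|a w IH] [|x0 x] [|h0 H] //=; rewrite IH. Qed.

Lemma map_snd_translate n (l : seq (cell n)) H :
  map snd (translate l H) = cell_add (map snd l) H.
Proof. by elim: l H => [|b l IH] [|h0 H] //=; rewrite IH. Qed.

Theorem proposition8p2 (n : nat) (A : 'I_n.+1 -> 'I_n.+1 -> int)
  (hA : simple_cartan A) (w : seq 'I_n.+1) (hw : reduced_w0 A w)
  (i : 'I_n.+1) (x H : seq int) (hx : size x = size w) (hH : inH A w H) :
  ecell A w i (cell_add x H) = omap (fun y => cell_add y H) (ecell A w i x) /\
  fcell A w i (cell_add x H) = omap (fun y => cell_add y H) (fcell A w i x).
Proof.
have Aii : A i i = 2 by case: hA => ->.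
have Hs : size H = size (zip w x) by rewrite size_zip hx minnn; case: hH.
have Hc : shift_compatible A i (map fst (zip w x)) H.
  by rewrite -/(unzip1 _) unzip1_zip ?hx //; apply: inH_shift_compatible.
rewrite /ecell /fcell !zip_cell_add (etil_translate Aii Hs Hc) (ftil_translate Aii Hs Hc).
by split; [case: (etil A i _) | case: (ftil A i _)] => //= l; rewrite map_snd_translate.
Qed.
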